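(* Fix an integer $\alpha\ge2$, an integer $\Delta\ge3$, and parameters $\beta_\mu>\beta_\nu\ge\frac{\Delta-2}{\Delta}$ with $(\beta_\nu/\beta_\mu)^\alpha\beta_\mu<\frac{\Delta-2}{\Delta}$. There exists a constant $C'=C'(\Delta,\alpha,\beta_\nu,\beta_\mu)$ such that for every $\Delta$-regular graph $G=(V,E)$, with $\nu,\mu$ the Gibbs distributions of $(G,\beta_\nu)$ and $(G,\beta_\mu)$, $$\frac1{C'}\sum_{\sigma\in\{-1,+1\}^V}\mu(\sigma)\left(\frac{\nu(\sigma)}{\mu(\sigma)}+1\right)^\alpha\ \le\ D_{\chi^\alpha}(\nu\|\mu)\ \le\ C'\sum_{\sigma\in\{-1,+1\}^V}\mu(\sigma)\left(\frac{\nu(\sigma)}{\mu(\sigma)}+1\right)^\alpha.$$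
   Context: For a graph $G=(V,E)$ and $\gamma>0$, the Ising model $(G,\gamma)$ has Gibbs distribution on $\{-1,+1\}^V$ given by $\pi(\sigma)\propto\gamma^{m(\sigma)}$, where $m(\sigma)=|\{\{u,v\}\in E:\sigma_u=\sigma_v\}|$. The $\chi^\alpha$-divergence is $D_{\chi^\alpha}(\nu\|\mu)=\sum_\sigma\mu(\sigma)\cdot\frac12\left|\frac{\nu(\sigma)}{\mu(\sigma)}-1\right|^\alpha$. *)

From mathcomp Require Import all_boot all_order all_algebra.
From mathcomp Require Import reals.
Set Implicit Arguments. Unset Strict Implicit. Unset Printing Implicit Defensive.
Import Order.TTheory GRing.Theory Num.Theory.
Local Open Scope ring_scope.

Definition simple_graph (V : finType) (e : rel V) : Prop :=
  symmetric e /\ irreflexive e.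

Definition regular (V : finType) (e : rel V) (D : nat) : Prop :=
  forall x : V, #|[set y | e x y]| = D.

Definition edgeset (V : finType) (e : rel V) : {set {set V}} :=
  [set [set p.1; p.2] | p in [set p : V * V | e p.1 p.2]].

(* Spin configurations sigma : V -> {-1,+1}, with true = +1, false = -1. *)
Definition config (V : finType) := {ffun V -> bool}.

Definition mono (V : finType) (e : rel V) (s : config V) : nat :=
  #|[set E in edgeset e | [forall x in E, forall y in E, s x == s y]]|.

Definition partition_fn (R : realType) (V : finType) (e : rel V) (g : R) : R :=
  \sum_(t : config V) g ^+ mono e t.

Definition gibbs (R : realType) (V : finType) (e : rel V) (g : R)
  (s : config V) : R :=
  g ^+ mono e s / partition_fn e g.

Definition chi_div (R : realType) (V : finType) (a : nat)
  (nu mu : config V -> R) : R :=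
  \sum_(s : config V) mu s * (2^-1 * `|nu s / mu s - 1| ^+ a).

Definition plus_moment (R : realType) (V : finType) (a : nat)
  (nu mu : config V -> R) : R :=
  \sum_(s : config V) mu s * (nu s / mu s + 1) ^+ a.

(* The likelihood ratio is nu/mu = K q^m(s) with q = bnu/bmu < 1 and K a ratio of
   partition functions.  Flipping a vertex v changes m by D - 2 a_v(s), where a_v(s)
   counts the neighbours of v agreeing with it; flipping a neighbour u of v first
   changes a_v by exactly one, so one of the two flips of v changes m.  Hence among
   s, s^v, s^u, s^uv some configuration has |nu/mu - 1| >= (1 - q)/2, and its
   mu-weight is at least min(bmu, 1/bmu)^(2D) mu(s).  Summing over s (the four flip
   maps are bijections) bounds the divergence below by a positive constant depending
   only on D, a, bnu, bmu; with |r - 1| <= r + 1 and (r + 1)^a <= 3^a (1 + |r - 1|^a)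
   the two sides are then comparable. *)

From mathcomp Require Import all_boot all_order all_algebra.
From mathcomp Require Import reals.
From mathcomp Require Import ring lra zify.
Import Order.TTheory GRing.Theory Num.Theory.
Set Implicit Arguments. Unset Strict Implicit. Unset Printing Implicit Defensive.

Lemma card_pairs_unordered (T : finType) (r : rel T) :
  symmetric r -> irreflexive r ->
  #|[set p : T * T | r p.1 p.2]|
    = (2 * #|[set [set p.1; p.2] | p in [set p : T * T | r p.1 p.2]]|)%N.
Proof.
move=> rsym rirr.
rewrite mulnC -sum1_card (partition_big_imset (fun p => [set p.1; p.2])) /=.
rewrite -sum_nat_const; apply: eq_bigr => _ /imsetP [[x y] Pxy ->] /=.
move: Pxy; rewrite inE /= => rxy.
have neq_xy : x != y by apply: contraTneq rxy => ->; rewrite rirr.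
rewrite (eq_bigl (mem [set (x, y); (y, x)])) ?sum1_card ?cards2 ?xpair_eqE ?(negbTE neq_xy) //.
move=> [x' y'] /=; rewrite !inE /= !xpair_eqE.
apply/andP/idP => [[rxy' /eqP eq_sets] | ].
  have : x' \in [set x; y] by rewrite -eq_sets set21.
  have : y' \in [set x; y] by rewrite -eq_sets set22.
  move=> /set2P [] eyp /set2P [] exp; move: rxy';
    by rewrite exp eyp ?rirr ?eqxx ?orbT.
case/orP => /andP [/eqP -> /eqP ->]; first by rewrite rxy.
by rewrite rsym rxy setUC.
Qed.

Lemma sum_pairs_touching (T : finType) (F G : T -> T -> nat) v :
  (\sum_x \sum_y (F x y + ((x == v) + (y == v)) * G x y)
    = \sum_x \sum_y F x y + \sum_y G v y + \sum_x G x v)%N.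
Proof.
have row x : (\sum_y (F x y + ((x == v) + (y == v)) * G x y)
    = \sum_y F x y + (x == v) * \sum_y G x y + G x v)%N.
  under eq_bigr do rewrite mulnDl addnA.
  rewrite big_split big_split /= -big_distrr /=; congr (_ + _).
  by under eq_bigr do rewrite mulnbl; rewrite -big_mkcond big_pred1_eq.
under eq_bigr do rewrite row.
rewrite !big_split /=; congr (_ + _ + _).
by under eq_bigr do rewrite mulnbl; rewrite -big_mkcond big_pred1_eq.
Qed.

Section SpinFlip.
Variables (V : finType) (e : rel V).

Definition flip (v : V) (s : config V) : config V :=
  [ffun x => if x == v then ~~ s x else s x].

Definition flip_if (b : bool) (v : V) : config V -> config V :=
  if b then flip v else id.

Lemma flipK v : involutive (flip v).
Proof.
by move=> s; apply/ffunP => x; rewrite !ffunE; case: eqP => // _; rewrite negbK.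
Qed.

Lemma flip_if_inj b v : injective (flip_if b v).
Proof. by case: b => //; apply: inv_inj; apply: flipK. Qed.

Definition mono_edge (s : config V) : rel V := fun x y => e x y && (s x == s y).

Definition mono_deg (s : config V) (x : V) : nat := \sum_y mono_edge s x y.

Lemma mono_unordered s :
  mono e s = #|[set [set p.1; p.2] | p in [set p : V * V | mono_edge s p.1 p.2]]|.
Proof.
apply: eq_card => E; rewrite !inE; apply/andP/imsetP => [[]|[p]].
  case/imsetP => p; rewrite inE => ep -> /forallP /(_ p.1).
  rewrite set21 /= => /forallP /(_ p.2); rewrite set22 /= => eq_sp.
  by exists p; rewrite // inE /mono_edge ep eq_sp.
rewrite inE => /andP [ep eq_sp] ->; split; first by apply/imsetP; exists p; rewrite ?inE.
apply/forallP => x; apply/implyP => /set2P [] ->; apply/forallP => y;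
  by apply/implyP => /set2P [] ->; rewrite // eq_sym.
Qed.

Hypothesis e_simple : simple_graph e.

Lemma mono_double s : (2 * mono e s = \sum_x mono_deg s x)%N.
Proof.
case: e_simple => esym eirr.
have msym : symmetric (mono_edge s) by move=> x y; rewrite /mono_edge esym eq_sym.
have mirr : irreflexive (mono_edge s) by move=> x; rewrite /mono_edge eirr.
rewrite mono_unordered -card_pairs_unordered // /mono_deg pair_big /=.
by rewrite -sum1dep_card big_mkcond; apply: eq_bigr => p _; case: mono_edge.
Qed.

Variable D : nat.
Hypothesis e_regular : regular e D.

Lemma mono_deg_complement s v : (mono_deg s v + \sum_y (e v y && (s v != s y)) = D)%N.
Proof.
rewrite -(e_regular v) -sum1dep_card /mono_deg -big_split [RHS]big_mkcond /=.
by apply: eq_bigr => y _; rewrite /mono_edge; case: e; case: eqP.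
Qed.

Lemma mono_flip s v : (mono e (flip v s) + 2 * mono_deg s v = mono e s + D)%N.
Proof.
case: e_simple => esym eirr.
pose dis (t : config V) x y := (e x y && (t x != t y) : nat).
(* A pair touching v switches between agreeing and disagreeing; the identity is
   arranged so that no truncated subtraction occurs. *)
have pair_flip x y : (mono_edge (flip v s) x y + ((x == v) + (y == v)) * mono_edge s x y
    = mono_edge s x y + ((x == v) + (y == v)) * dis s x y)%N.
  rewrite /mono_edge /dis !ffunE.
  case: (eqVneq x v) => [->|xv]; case: (eqVneq y v) => [->|yv]; rewrite ?eirr //=;
    by case: e; case: (s _); case: (s _).
have sums : (\sum_x \sum_y (mono_edge (flip v s) x y + ((x == v) + (y == v)) * mono_edge s x y)
    = \sum_x \sum_y (mono_edge s x y + ((x == v) + (y == v)) * dis s x y))%N.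
  by apply: eq_bigr => x _; apply: eq_bigr => y _; exact: pair_flip.
rewrite !sum_pairs_touching -!/(mono_deg _ _) -!mono_double in sums.
have in_deg : (\sum_x mono_edge s x v = mono_deg s v)%N.
  by apply: eq_bigr => x _; rewrite /mono_edge esym eq_sym.
have in_dis : (\sum_x dis s x v = \sum_y (e v y && (s v != s y)))%N.
  by apply: eq_bigr => x _; rewrite /dis esym eq_sym.
have := mono_deg_complement s v.
move: sums; rewrite in_deg in_dis /dis; lia.
Qed.

Lemma mono_flip_if_dist b v s :
  (mono e (flip_if b v s) <= mono e s + D)%N /\ (mono e s <= mono e (flip_if b v s) + D)%N.
Proof.
case: b => /=; last by rewrite !leq_addr.
have := mono_flip s v; have := mono_deg_complement s v; lia.
Qed.

Lemma mono_deg_flip_nbr s u v : e v u ->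
  (mono_deg (flip u s) v + (s u == s v) = mono_deg s v + (s u != s v))%N.
Proof.
case: e_simple => _ eirr evu.
have vu : v != u by apply: contraTneq evu => ->; rewrite eirr.
rewrite /mono_deg (bigD1 u) //= [in RHS](bigD1 u) //=.
have -> : (\sum_(y | y != u) mono_edge (flip u s) v y = \sum_(y | y != u) mono_edge s v y)%N.
  by apply: eq_bigr => y yu; rewrite /mono_edge !ffunE (negbTE yu) (negbTE vu).
rewrite /mono_edge !ffunE eqxx (negbTE vu) evu /=.
by move: (s u) (s v) => [] [] /=; lia.
Qed.

Lemma mono_flip_nbr s u v : e v u ->
  exists b, mono e (flip v (flip_if b u s)) != mono e (flip_if b u s).
Proof.
move=> evu; case: (eqVneq (mono e (flip v s)) (mono e s)) => [flip_v_eq | ]; last by exists false.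
exists true; apply/eqP => /= flip_uv_eq.
have := mono_flip s v; have := mono_flip (flip u s) v; have := mono_deg_flip_nbr s evu.
by case: (s u == s v) => /=; lia.
Qed.

End SpinFlip.

Local Open Scope ring_scope.

Section RealBounds.
Variable R : realFieldType.

Lemma geometric_far_from_one (q K : R) (m1 m2 : nat) :
  0 < q -> q < 1 -> 0 < K -> m1 != m2 ->
  (1 - q) / 2 <= `|q ^+ m1 * K - 1| \/ (1 - q) / 2 <= `|q ^+ m2 * K - 1|.
Proof.
move=> q_gt0 q_lt1 K_gt0.
wlog lt_m12 : m1 m2 / (m1 < m2)%N.
  move=> wlog_lt; case: (ltngtP m1 m2) => [lt_m12|lt_m21|->] // _.
    by apply: wlog_lt; rewrite // ltn_eqF.
  by apply/or_comm/wlog_lt; rewrite // ltn_eqF.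
move=> _; set x := q ^+ m1 * K; set y := q ^+ m2 * K.
have x_ge0 : 0 <= x by rewrite mulr_ge0 ?exprn_ge0 ?ltW.
have y_le : y <= q * x.
  rewrite /y -(subnK (ltnW lt_m12)) exprD -mulrA -/x.
  by apply: (ler_wpM2r x_ge0); apply: ler_iXnr; rewrite ?subn_gt0 ?ltW.
case: (lerP ((1 - q) / 2) `|x - 1|) => [|/ltr_normlP [x_lb x_ub]]; first by left.
have : q * x <= q * (1 + (1 - q) / 2) by rewrite ler_pM2l //; lra.
by right; rewrite ler_normr; apply/orP; right; nra.
Qed.

Lemma expr_near_ge (b : R) (m m' k : nat) : 0 < b ->
  (m <= m' + k)%N -> (m' <= m + k)%N -> Num.min b b^-1 ^+ k * b ^+ m <= b ^+ m'.
Proof.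
move=> b_gt0 le_m le_m'; set rho := Num.min b b^-1.
have rho_ge0 : 0 <= rho by rewrite le_min invr_ge0 andbb ltW.
have bm_ge0 : 0 <= b ^+ m by rewrite exprn_ge0 ?ltW.
case: (lerP b 1) => [b_le1 | b_gt1].
  have : rho ^+ k <= b ^+ k.
    by apply: lerXn2r; rewrite ?nnegrE ?ge_min ?lexx // ltW.
  move/(ler_wpM2r bm_ge0)/le_trans; apply.
  by rewrite -exprD addnC ler_wiXn2l // ltW.
have : rho ^+ k <= b^-1 ^+ k.
  by apply: lerXn2r; rewrite ?nnegrE ?ge_min ?lexx ?orbT ?invr_ge0 // ltW.
move/(ler_wpM2r bm_ge0)/le_trans; apply.
rewrite exprVn ler_pdivrMl ?exprn_gt0 // -exprD ler_weXn2l ?ltW //; lia.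
Qed.

Lemma expr_norm_subr1_le (r : R) (a : nat) : 0 <= r -> `|r - 1| ^+ a <= (r + 1) ^+ a.
Proof.
move=> r_ge0; apply: lerXn2r; rewrite ?nnegrE //; first lra.
by apply/ler_normlP; split; lra.
Qed.

Lemma expr_addr1_le (r : R) (a : nat) : 0 <= r -> (r + 1) ^+ a <= 3 ^+ a * (1 + `|r - 1| ^+ a).
Proof.
move=> r_ge0; rewrite mulrDr mulr1.
have pow_ge0 (x : R) : 0 <= x -> 0 <= x ^+ a by exact: exprn_ge0.
case: (lerP r 2) => [r_le2 | r_gt2].
  rewrite -[X in X <= _]addr0 lerD ?mulr_ge0 ?pow_ge0 //.
  by apply: lerXn2r; rewrite ?nnegrE; lra.
rewrite -[X in X <= _]add0r lerD ?pow_ge0 // -exprMn.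
apply: lerXn2r; rewrite ?nnegrE ?mulr_ge0 //; try lra.
by have := ler_norm (r - 1); lra.
Qed.

End RealBounds.

Lemma sum_le_of_cover (I T : finType) (R : numDomainType) (f : I -> T -> T) (w g : T -> R) (c : R) :
  (forall i, injective (f i)) -> (forall t, 0 <= g t) ->
  (forall s, exists i, c * w s <= g (f i s)) ->
  c * \sum_s w s <= #|I|%:R * \sum_s g s.
Proof.
move=> f_inj g_ge0 cover.
have -> : #|I|%:R * \sum_s g s = \sum_i \sum_s g (f i s).
  by rewrite -sumr_const mulr_suml; apply: eq_bigr => i _; rewrite mul1r (reindex_inj (f_inj i)).
rewrite mulr_sumr exchange_big /=; apply: ler_sum => s _.
have [i cover_i] := cover s.
by rewrite (bigD1 i) //= (le_trans cover_i) // lerDl sumr_ge0.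
Qed.

Section Gibbs.
Variables (R : realType) (V : finType) (e : rel V).

Lemma partition_fn_gt0 (g : R) : 0 < g -> 0 < partition_fn e g.
Proof.
move=> g_gt0; rewrite /partition_fn (bigD1 [ffun=> true]) //=.
by rewrite ltr_pwDl ?exprn_gt0 // sumr_ge0 // => t _; rewrite exprn_ge0 ?ltW.
Qed.

Lemma gibbs_gt0 (g : R) s : 0 < g -> 0 < gibbs e g s.
Proof. by move=> g_gt0; rewrite divr_gt0 ?exprn_gt0 ?partition_fn_gt0. Qed.

Lemma sum_gibbs (g : R) : 0 < g -> \sum_s gibbs e g s = 1.
Proof. by move=> g_gt0; rewrite -mulr_suml divff // gt_eqF ?partition_fn_gt0. Qed.

Lemma gibbs_ratio (g h : R) s : 0 < g -> 0 < h ->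
  gibbs e g s / gibbs e h s = (g / h) ^+ mono e s * (partition_fn e h / partition_fn e g).
Proof.
move=> g_gt0 h_gt0; rewrite /gibbs expr_div_n.
have := partition_fn_gt0 g_gt0; have := partition_fn_gt0 h_gt0.
have := exprn_gt0 (mono e s) h_gt0.
move: (g ^+ _) (h ^+ _) (partition_fn e g) (partition_fn e h) => x y Zg Zh y_gt0 Zh_gt0 Zg_gt0.
by field; rewrite !gt_eqF.
Qed.

Lemma gibbs_near (g : R) s t (k : nat) : 0 < g ->
  (mono e s <= mono e t + k)%N -> (mono e t <= mono e s + k)%N ->
  Num.min g g^-1 ^+ k * gibbs e g s <= gibbs e g t.
Proof.
move=> g_gt0 le_s le_t; rewrite /gibbs mulrA ler_pM2r ?invr_gt0 ?partition_fn_gt0 //.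
exact: expr_near_ge.
Qed.

End Gibbs.

Section Divergence.
Variables (R : realType) (V : finType) (a : nat) (nu mu : config V -> R).
Hypotheses (nu_ge0 : forall s, 0 <= nu s) (mu_ge0 : forall s, 0 <= mu s).

Definition chi_term s := mu s * `|nu s / mu s - 1| ^+ a.

Lemma chi_term_ge0 s : 0 <= chi_term s.
Proof. by rewrite mulr_ge0 ?exprn_ge0. Qed.

Lemma chi_divE : chi_div a nu mu = 2^-1 * \sum_s chi_term s.
Proof. by rewrite mulr_sumr; apply: eq_bigr => s _; rewrite mulrCA. Qed.

Lemma chi_div_le_plus_moment : chi_div a nu mu <= plus_moment a nu mu.
Proof.
apply: ler_sum => s _; apply: (ler_wpM2l (mu_ge0 s)).
have ratio_ge0 : 0 <= nu s / mu s by rewrite divr_ge0.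
have := expr_norm_subr1_le a ratio_ge0; have := exprn_ge0 a (normr_ge0 (nu s / mu s - 1)).
lra.
Qed.

Lemma plus_moment_le_chi_div : \sum_s mu s = 1 ->
  plus_moment a nu mu <= 3 ^+ a * (1 + 2 * chi_div a nu mu).
Proof.
move=> mu_sum1; rewrite chi_divE mulrA divff ?mul1r ?pnatr_eq0 //.
rewrite -[X in _ * (X + _)]mu_sum1 -big_split mulr_sumr /=.
apply: ler_sum => s _; rewrite /chi_term -[X in _ * (X + _)]mulr1 -mulrDr mulrCA.
by apply: (ler_wpM2l (mu_ge0 s)); apply: expr_addr1_le; rewrite divr_ge0.
Qed.

End Divergence.

Definition ising_chi_floor (R : realFieldType) (a D : nat) (bnu bmu : R) : R :=
  ((1 - bnu / bmu) / 2) ^+ a * Num.min bmu bmu^-1 ^+ (2 * D).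

Lemma ising_chi_floor_gt0 (R : realFieldType) (a D : nat) (bnu bmu : R) :
  0 < bnu -> bnu < bmu -> 0 < ising_chi_floor a D bnu bmu.
Proof.
move=> bnu_gt0 bnu_lt; have bmu_gt0 : 0 < bmu by apply: lt_trans bnu_lt.
rewrite mulr_gt0 ?exprn_gt0 ?lt_min ?invr_gt0 ?bmu_gt0 // divr_gt0 // subr_gt0.
by rewrite ltr_pdivrMr // mul1r.
Qed.

Section IsingLowerBound.
Variables (R : realType) (V : finType) (e : rel V) (D a : nat) (bnu bmu : R).
Hypotheses (e_simple : simple_graph e) (e_regular : regular e D).
Hypotheses (bnu_gt0 : 0 < bnu) (bnu_lt : bnu < bmu).

Local Notation nu := (gibbs e bnu).
Local Notation mu := (gibbs e bmu).
Local Notation floor := (ising_chi_floor a D bnu bmu).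

Lemma chi_term_near_flip_ge u v : e v u -> forall s,
  exists bb : bool * bool,
    floor * mu s <= chi_term a nu mu (flip_if bb.1 v (flip_if bb.2 u s)).
Proof.
move=> evu s; have bmu_gt0 : 0 < bmu by apply: lt_trans bnu_lt.
set q := bnu / bmu; set eps := (1 - q) / 2.
have q_gt0 : 0 < q by rewrite divr_gt0.
have q_lt1 : q < 1 by rewrite ltr_pdivrMr // mul1r.
have [b2 mono_neq] := mono_flip_nbr e_simple e_regular s evu.
set t := flip_if b2 u s.
have [b1 far] : exists b1, eps <= `|nu (flip_if b1 v t) / mu (flip_if b1 v t) - 1|.
  have K_gt0 : 0 < partition_fn e bmu / partition_fn e bnu.
    by rewrite divr_gt0 ?partition_fn_gt0.
  by case: (geometric_far_from_one q_gt0 q_lt1 K_gt0 mono_neq) => far;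
    [exists true | exists false]; rewrite gibbs_ratio.
exists (b1, b2) => /=.
have [le_t ge_t] := mono_flip_if_dist e_simple e_regular b1 v t.
have [le_s ge_s] := mono_flip_if_dist e_simple e_regular b2 u s; rewrite -/t in le_s ge_s.
have near : Num.min bmu bmu^-1 ^+ (2 * D) * mu s <= mu (flip_if b1 v t).
  by apply: gibbs_near => //; lia.
rewrite /chi_term /ising_chi_floor -mulrA mulrC; apply: ler_pM near _ => //.
- rewrite mulr_ge0 ?exprn_ge0 ?ltW ?gibbs_gt0 //.
  by rewrite lt_min invr_gt0 andbb.
- by rewrite exprn_ge0 // divr_ge0 // subr_ge0 ltW.
- by apply: lerXn2r; rewrite ?nnegrE // divr_ge0 // subr_ge0 ltW.
Qed.

Lemma ising_chi_div_ge : (0 < #|V|)%N -> (0 < D)%N -> floor / 8 <= chi_div a nu mu.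
Proof.
case/card_gt0P => v _ D_gt0; have bmu_gt0 : 0 < bmu by apply: lt_trans bnu_lt.
have [u evu] : exists u, e v u.
  have /card_gt0P [u] : (0 < #|[set y | e v y]|)%N by rewrite e_regular.
  by rewrite inE; exists u.
have flips_inj (bb : bool * bool) : injective (flip_if bb.1 v \o flip_if bb.2 u).
  exact/inj_comp/flip_if_inj/flip_if_inj.
have mu_ge0 s : 0 <= mu s by rewrite ltW ?gibbs_gt0.
have := sum_le_of_cover flips_inj (chi_term_ge0 a nu mu_ge0) (chi_term_near_flip_ge evu).
by rewrite sum_gibbs // mulr1 card_prod card_bool chi_divE; lra.
Qed.

End IsingLowerBound.

Lemma two_sided_of_floor (R : realFieldType) (A c x y : R) :
  1 <= A -> 0 < c -> c <= x -> x <= y -> y <= A * (1 + 2 * x) ->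
  (A * (c^-1 + 2))^-1 * y <= x /\ x <= A * (c^-1 + 2) * y.
Proof.
move=> A_ge1 c_gt0 c_le x_le y_le; have cV_gt0 : 0 < c^-1 by rewrite invr_gt0.
have one_le : 1 <= c^-1 * x by rewrite mulrC ler_pdivlMr // mul1r.
have C_gt0 : 0 < A * (c^-1 + 2) by rewrite mulr_gt0; lra.
split.
  rewrite ler_pdivrMl //; apply: le_trans (y_le) _.
  by rewrite -mulrA ler_wpM2l; lra.
apply: le_trans (x_le) _; apply: ler_peMl; first lra.
by apply: le_trans (A_ge1) _; apply: ler_peMr; lra.
Qed.

Unset Implicit Arguments.

Theorem corollary7p3 (R : realType) (a D : nat) (bnu bmu : R) :
  (2 <= a)%N -> (3 <= D)%N ->
  (D%:R - 2) / D%:R <= bnu -> bnu < bmu ->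
  (bnu / bmu) ^+ a * bmu < (D%:R - 2) / D%:R ->
  exists C : R, 0 < C /\
    forall (V : finType) (e : rel V),
      (0 < #|V|)%N -> simple_graph e -> regular e D ->
      let nu := gibbs e bnu in
      let mu := gibbs e bmu in
      C^-1 * plus_moment a nu mu <= chi_div a nu mu /\
      chi_div a nu mu <= C * plus_moment a nu mu.
Proof.
move=> _ D_ge3 bnu_ge bnu_lt _.
have D_gt0 : (0 < D)%N by apply: leq_trans D_ge3.
have bnu_gt0 : 0 < bnu.
  have D_ge3R : 3 <= D%:R :> R by rewrite (ler_nat R 3 D).
  by apply: lt_le_trans bnu_ge; rewrite divr_gt0; lra.
have bmu_gt0 : 0 < bmu by apply: lt_trans bnu_lt.
have c_gt0 : 0 < ising_chi_floor a D bnu bmu / 8 by rewrite divr_gt0 ?ising_chi_floor_gt0.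
exists (3 ^+ a * ((ising_chi_floor a D bnu bmu / 8)^-1 + 2)).
split; first by rewrite mulr_gt0 ?exprn_gt0 ?addr_gt0 ?invr_gt0.
move=> V e V_gt0 e_simple e_regular /=.
have nu_ge0 s : 0 <= gibbs e bnu s by rewrite ltW ?gibbs_gt0.
have mu_ge0 s : 0 <= gibbs e bmu s by rewrite ltW ?gibbs_gt0.
apply: two_sided_of_floor => //.
- by rewrite exprn_ege1 //; lra.
- exact (ising_chi_div_ge a e_simple e_regular bnu_gt0 bnu_lt V_gt0 D_gt0).
- exact (chi_div_le_plus_moment a nu_ge0 mu_ge0).
- exact (plus_moment_le_chi_div a nu_ge0 mu_ge0 (sum_gibbs e bmu_gt0)).
Qed.
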